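(* Let $d_0$ and $d_1$ be metrics on $\omega$. The following are equivalent: (1) the completions of $\langle\omega,d_0\rangle$ and $\langle\omega,d_1\rangle$ are isometrically isomorphic Polish metric spaces; (2) there is a metric $d^*$ on $\omega$ and, for each $e\in\{0,1\}$, a dense isometry $\iota_e:\langle\omega,d_e\rangle\to\langle\omega,d^*\rangle$.
   Context: An isometry is a distance-preserving map (not necessarily onto); an isometrical isomorphism is an onto isometry; a dense isometry is an isometry with dense image. A completion of a metric space $\langle X,d\rangle$ is a complete metric space $\langle X^*,d^*\rangle$ together with a dense isometry $\langle X,d\rangle\to\langle X^*,d^*\rangle$. *)

From Stdlib Require Import Reals.
Open Scope R_scope.

Definition is_metric {X : Type} (d : X -> X -> R) : Prop :=
  (forall x y, 0 <= d x y) /\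
  (forall x y, d x y = 0 <-> x = y) /\
  (forall x y, d x y = d y x) /\
  (forall x y z, d x z <= d x y + d y z).

Definition isometry {X Y : Type} (dX : X -> X -> R) (dY : Y -> Y -> R)
  (f : X -> Y) : Prop :=
  forall x x', dY (f x) (f x') = dX x x'.

Definition isometric_isomorphism {X Y : Type} (dX : X -> X -> R)
  (dY : Y -> Y -> R) (f : X -> Y) : Prop :=
  isometry dX dY f /\ (forall y, exists x, f x = y).

Definition dense_set {Y : Type} (dY : Y -> Y -> R) (S : Y -> Prop) : Prop :=
  forall y eps, 0 < eps -> exists s, S s /\ dY y s < eps.

Definition dense_isometry {X Y : Type} (dX : X -> X -> R) (dY : Y -> Y -> R)
  (f : X -> Y) : Prop :=
  isometry dX dY f /\ dense_set dY (fun y => exists x, f x = y).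

Definition cauchy_seq {X : Type} (d : X -> X -> R) (u : nat -> X) : Prop :=
  forall eps, 0 < eps -> exists N, forall m n, (N <= m)%nat -> (N <= n)%nat ->
    d (u m) (u n) < eps.

Definition converges_to {X : Type} (d : X -> X -> R) (u : nat -> X) (x : X) : Prop :=
  forall eps, 0 < eps -> exists N, forall n, (N <= n)%nat -> d (u n) x < eps.

Definition complete {X : Type} (d : X -> X -> R) : Prop :=
  forall u, cauchy_seq d u -> exists x, converges_to d u x.

Definition separable {X : Type} (d : X -> X -> R) : Prop :=
  exists s : nat -> X, dense_set d (fun y => exists n, s n = y).

Definition is_completion {X Xs : Type} (d : X -> X -> R) (ds : Xs -> Xs -> R)
  (iota : X -> Xs) : Prop :=
  is_metric ds /\ complete ds /\ dense_isometry d ds iota.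

Definition polish_metric {X : Type} (d : X -> X -> R) : Prop :=
  is_metric d /\ complete d /\ separable d.

(* Completions are unique up to isometric isomorphism, and a completion of a
   dense subspace is a completion of the whole space.  Hence under (2) every
   completion of <omega,d_e> is a completion of <omega,d*>, and any two of them
   are isometrically isomorphic; being completions of countable spaces they are
   Polish.  Conversely, transport one completion onto the other by the given
   isomorphism: the images of omega under the two dense embeddings then lie in
   one complete space, and their union is countably infinite.  Enumerating it
   without repetitions (Cantor-Bernstein) and pulling back the metric gives d*. *)

From Stdlib Require Import Reals Lra Lia ClassicalEpsilon.
From mathcomp Require Import ssreflect ssrfun ssrbool.
From mathcomp Require Import boolp classical_sets cardinality.
Open Scope R_scope.

Lemma Un_cv_const (c : R) : Un_cv (fun _ => c) c.
Proof. by move=> eps eps_gt0; exists 0%nat => n _; rewrite /R_dist Rminus_diag Rabs_R0. Qed.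

Lemma Un_cv_le_eventually (u v : nat -> R) (l1 l2 : R) :
  Un_cv u l1 -> Un_cv v l2 -> (exists N, forall n, (N <= n)%nat -> u n <= v n) ->
  l1 <= l2.
Proof.
move=> cu cv [N uv]; apply: Rnot_lt_le => l21.
have [N1 HN1] := cu ((l1 - l2) / 2) ltac:(lra).
have [N2 HN2] := cv ((l1 - l2) / 2) ltac:(lra).
have := uv (max N (max N1 N2)) ltac:(lia).
have /Rabs_def2 := HN1 (max N (max N1 N2)) ltac:(lia).
have /Rabs_def2 := HN2 (max N (max N1 N2)) ltac:(lia).
lra.
Qed.

Lemma Un_cv_squeeze (a b e : nat -> R) (l : R) :
  Un_cv a l -> Un_cv e 0 -> (forall k, Rabs (b k - a k) <= e k) -> Un_cv b l.
Proof.
move=> ca ce ab eps eps_gt0.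
have [N1 HN1] := ca (eps / 2) ltac:(lra).
have [N2 HN2] := ce (eps / 2) ltac:(lra).
exists (max N1 N2) => n n_ge; rewrite /R_dist in HN1 HN2 *.
have := HN1 n ltac:(lia); have := HN2 n ltac:(lia); have := ab n.
rewrite Rminus_0_r; split_Rabs; lra.
Qed.

Lemma RinvN_eventually_lt (eps : R) :
  0 < eps -> exists N, forall n, (N <= n)%nat -> RinvN n < eps.
Proof.
move=> /RinvN_cv [N HN]; exists N => n /HN.
by rewrite /R_dist Rminus_0_r Rabs_pos_eq //; apply: Rlt_le; apply: cond_pos.
Qed.

(* Unspecified when [v] diverges. *)
Definition Rlim (v : nat -> R) : R := epsilon (inhabits 0) (Un_cv v).

Lemma Rlim_spec (v : nat -> R) : Cauchy_crit v -> Un_cv v (Rlim v).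
Proof. by move=> /R_complete [l vl]; apply: epsilon_spec; exists l. Qed.

Section MetricSpace.
Context {X : Type} (d : X -> X -> R) (hd : is_metric d).

Lemma dist_diff_le (a b c e : X) : Rabs (d a b - d c e) <= d a c + d b e.
Proof.
case: hd => _ [_ [dsym dtri]].
have := dtri a c b; have := dtri c e b; have := dtri c a e; have := dtri a b e.
rewrite (dsym c a) (dsym e b) => *; apply: Rabs_le; lra.
Qed.

Lemma converges_const (x : X) : converges_to d (fun=> x) x.
Proof.
case: hd => _ [d0 _] eps eps_gt0; exists 0%nat => n _.
by rewrite (proj2 (d0 x x)).
Qed.

Lemma converges_toE (u : nat -> X) (x : X) :
  converges_to d u x <-> Un_cv (fun k => d (u k) x) 0.
Proof.
case: hd => dpos _.
split=> cu eps /cu [N HN]; exists N => n /HN; rewrite /R_dist Rminus_0_r Rabs_pos_eq //.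
Qed.

Lemma converges_cauchy (u : nat -> X) (x : X) : converges_to d u x -> cauchy_seq d u.
Proof.
case: hd => _ [_ [dsym dtri]] cu eps eps_gt0.
have [N HN] := cu (eps / 2) ltac:(lra).
exists N => m n m_ge n_ge; have := dtri (u m) x (u n); rewrite (dsym x).
have := HN m m_ge; have := HN n n_ge; lra.
Qed.

Lemma converges_dist (u v : nat -> X) (x y : X) :
  converges_to d u x -> converges_to d v y -> Un_cv (fun k => d (u k) (v k)) (d x y).
Proof.
move=> /converges_toE cu /converges_toE cv.
apply: (Un_cv_squeeze _ _ (fun k => d (u k) x + d (v k) y) _ (Un_cv_const _)).
  by rewrite -(Rplus_0_r 0); apply: CV_plus.
by move=> k; apply: dist_diff_le.
Qed.

Lemma converges_unique (u : nat -> X) (x y : X) :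
  converges_to d u x -> converges_to d u y -> x = y.
Proof.
case: hd => _ [d0 _] ux uy; apply/d0/(UL_sequence _ _ _ (converges_dist _ _ _ _ ux uy)).
have -> : (fun k => d (u k) (u k)) = fun=> 0 by apply: funext => k; apply/d0.
exact: Un_cv_const.
Qed.

Lemma converges_of_close (u v : nat -> X) (x : X) :
  (forall k, d (u k) (v k) < RinvN k) -> converges_to d v x -> converges_to d u x.
Proof.
case: hd => _ [_ [_ dtri]] uv cv eps eps_gt0.
have [N1 HN1] := RinvN_eventually_lt (eps / 2) ltac:(lra).
have [N2 HN2] := cv (eps / 2) ltac:(lra).
exists (max N1 N2) => n n_ge; have := dtri (u n) (v n) x.
have := uv n; have := HN1 n ltac:(lia); have := HN2 n ltac:(lia); lra.
Qed.

Lemma cauchy_of_close (u v : nat -> X) :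
  (forall k, d (u k) (v k) < RinvN k) -> cauchy_seq d u -> cauchy_seq d v.
Proof.
case: hd => _ [_ [dsym dtri]] uv cu eps eps_gt0.
have [N1 HN1] := RinvN_eventually_lt (eps / 3) ltac:(lra).
have [N2 HN2] := cu (eps / 3) ltac:(lra).
exists (max N1 N2) => m n m_ge n_ge.
have := dtri (v m) (u m) (v n); have := dtri (u m) (u n) (v n).
rewrite (dsym (v m) (u m)); have := uv m; have := uv n.
have := HN1 m ltac:(lia); have := HN1 n ltac:(lia); have := HN2 m n ltac:(lia) ltac:(lia).
lra.
Qed.

Lemma dense_approx_seq {A : Type} (e : A -> X) :
  dense_set d (fun y => exists a, e a = y) ->
  forall x, exists a : nat -> A, converges_to d (fun k => e (a k)) x.
Proof.
case: hd => _ [_ [dsym _]] e_dense x.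
have /choice [a ha] : forall k, exists a, d (e a) x < RinvN k.
  move=> k; have [_ [[a <-] xa]] := e_dense x (RinvN k) (cond_pos _).
  by exists a; rewrite dsym.
by exists a; apply: (converges_of_close _ _ _ ha (converges_const x)).
Qed.

Lemma complete_of_dense {A : Type} (e : A -> X) :
  dense_set d (fun y => exists a, e a = y) ->
  (forall a : nat -> A, cauchy_seq d (fun k => e (a k)) ->
     exists x, converges_to d (fun k => e (a k)) x) ->
  complete d.
Proof.
move=> e_dense e_complete u cu.
have /choice [a ha] : forall k, exists a, d (u k) (e a) < RinvN k.
  move=> k; have [_ [[a <-] ua]] := e_dense (u k) (RinvN k) (cond_pos _).
  by exists a.
have [x ax] := e_complete a (cauchy_of_close _ _ ha cu).
by exists x; apply: (converges_of_close _ _ _ ha).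
Qed.

End MetricSpace.

Lemma isometry_cauchy {A B : Type} (dA : A -> A -> R) (dB : B -> B -> R)
    (f : A -> B) (u : nat -> A) :
  isometry dA dB f -> cauchy_seq dB (fun k => f (u k)) <-> cauchy_seq dA u.
Proof.
move=> f_iso; split=> cu eps /cu [N HN]; exists N => m n m_ge n_ge.
  by rewrite -f_iso; apply: HN.
by rewrite f_iso; apply: HN.
Qed.

Lemma isometry_converges {A B : Type} (dA : A -> A -> R) (dB : B -> B -> R)
    (f : A -> B) (u : nat -> A) (a : A) :
  isometry dA dB f -> converges_to dA u a -> converges_to dB (fun k => f (u k)) (f a).
Proof. by move=> f_iso cu eps /cu [N HN]; exists N => n /HN; rewrite f_iso. Qed.

Lemma dense_isometry_comp_iso {A B Y : Type}
    (dA : A -> A -> R) (dB : B -> B -> R) (dY : Y -> Y -> R) (j : A -> B) (f : B -> Y) :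
  dense_isometry dA dB j -> isometric_isomorphism dB dY f ->
  dense_isometry dA dY (fun a => f (j a)).
Proof.
move=> [j_iso j_dense] [f_iso f_onto]; split=> [a a'|y eps eps_gt0].
  by rewrite f_iso.
have [b <-] := f_onto y; have [_ [[a <-] ba]] := j_dense b eps eps_gt0.
by exists (f (j a)); split; [exists a | rewrite f_iso].
Qed.

Lemma dense_isometry_factor {A B Y : Type}
    (dA : A -> A -> R) (dB : B -> B -> R) (dY : Y -> Y -> R) (g : B -> Y) (i : A -> B) :
  isometry dB dY g -> dense_isometry dA dY (fun a => g (i a)) -> dense_isometry dA dB i.
Proof.
move=> g_iso [gi_iso gi_dense]; split=> [a a'|b eps eps_gt0].
  by rewrite -g_iso.
have [_ [[a <-] ba]] := gi_dense (g b) eps eps_gt0.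
by exists (i a); split; [exists a | rewrite -g_iso].
Qed.

Lemma isometry_extension {A B Y : Type}
    (dA : A -> A -> R) (dB : B -> B -> R) (dY : Y -> Y -> R) (e : A -> B) (g : A -> Y) :
  is_metric dB -> is_metric dY ->
  complete dY -> dense_isometry dA dB e -> isometry dA dY g ->
  exists G : B -> Y, isometry dB dY G /\ forall a, G (e a) = g a.
Proof.
move=> hB hY Y_complete [e_iso e_dense] g_iso.
have lim_dist t t' b b' y y' : converges_to dB (fun k => e (t k)) b ->
    converges_to dB (fun k => e (t' k)) b' -> converges_to dY (fun k => g (t k)) y ->
    converges_to dY (fun k => g (t' k)) y' -> dY y y' = dB b b'.
  move=> eb eb' gy gy'; apply: UL_sequence (converges_dist dY hY _ _ _ _ gy gy') _.
  have -> : (fun k => dY (g (t k)) (g (t' k))) = fun k => dB (e (t k)) (e (t' k)).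
    by apply: funext => k; rewrite g_iso e_iso.
  exact: converges_dist.
have /choice [s s_cv] := dense_approx_seq dB hB e e_dense.
have /choice [G G_cv] : forall b, exists y, converges_to dY (fun k => g (s b k)) y.
  move=> b; apply: Y_complete; apply/(isometry_cauchy _ _ _ _ g_iso).
  by apply/(isometry_cauchy _ _ _ _ e_iso); apply: converges_cauchy (s_cv b).
exists G; split=> [b b'|a]; first exact: lim_dist (s_cv b) (s_cv b') (G_cv b) (G_cv b').
case: (hB) (hY) => _ [dB0 _] [_ [dY0 _]]; apply/dY0.
rewrite -(proj2 (dB0 (e a) (e a))) //; apply: (lim_dist _ (fun=> a)) (s_cv (e a)) _ (G_cv (e a)) _.
  exact: converges_const.
exact: converges_const.
Qed.

Lemma isometry_extension_onto {A B Y : Type}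
    (dA : A -> A -> R) (dB : B -> B -> R) (dY : Y -> Y -> R)
    (e : A -> B) (g : A -> Y) (G : B -> Y) :
  is_metric dY -> complete dB -> isometry dA dB e -> isometry dB dY G ->
  (forall a, G (e a) = g a) ->
  dense_set dY (fun y => exists a, g a = y) -> forall y, exists b, G b = y.
Proof.
move=> hY B_complete e_iso G_iso Ge g_dense y.
have [t gt_y] := dense_approx_seq dY hY g g_dense y.
have [b et_b] : exists b, converges_to dB (fun k => e (t k)) b.
  apply: B_complete; apply/(isometry_cauchy _ _ _ _ e_iso).
  apply/(isometry_cauchy dA dY g); last exact: converges_cauchy gt_y.
  by move=> a a'; rewrite -!Ge G_iso e_iso.
exists b; apply: converges_unique hY _ _ _ (isometry_converges _ _ _ _ _ G_iso et_b) _.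
by under eq_fun do rewrite Ge.
Qed.

Lemma completion_polish {X : Type} (d : nat -> nat -> R) (dX : X -> X -> R)
    (j : nat -> X) :
  is_completion d dX j -> polish_metric dX.
Proof. by move=> [hX [X_complete [_ j_dense]]]; split=> //; split=> //; exists j. Qed.

Lemma completion_of_dense_subspace {A B X : Type}
    (dA : A -> A -> R) (dB : B -> B -> R) (dX : X -> X -> R) (i : A -> B) (j : A -> X) :
  is_metric dB -> dense_isometry dA dB i -> is_completion dA dX j ->
  exists j' : B -> X, is_completion dB dX j'.
Proof.
move=> hB i_dense [hX [X_complete [j_iso j_dense]]].
have [j' [j'_iso j'i]] := isometry_extension _ _ _ _ _ hB hX X_complete i_dense j_iso.
exists j'; split=> //; split=> //; split=> // x eps /(j_dense x) [_ [[a <-] xa]].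
by exists (j' (i a)); split; [exists (i a) | rewrite j'i].
Qed.

Lemma completion_unique {A X Y : Type}
    (dA : A -> A -> R) (dX : X -> X -> R) (dY : Y -> Y -> R) (jX : A -> X) (jY : A -> Y) :
  is_completion dA dX jX -> is_completion dA dY jY ->
  exists F : X -> Y, isometric_isomorphism dX dY F.
Proof.
move=> [hX [X_complete jX_dense]] [hY [Y_complete [jY_iso jY_dense]]].
have [F [F_iso FjX]] := isometry_extension _ _ _ _ _ hX hY Y_complete jX_dense jY_iso.
exists F; split=> //.
exact: isometry_extension_onto hY X_complete (proj1 jX_dense) F_iso FjX jY_dense.
Qed.

Section Completion.
Context {X : Type} (d : X -> X -> R) (hd : is_metric d).

Definition dist_profile (u : nat -> X) (phi : X -> R) : Prop :=
  cauchy_seq d u /\ forall x, Un_cv (fun k => d (u k) x) (phi x).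

(* A point is represented by its distance function to the points of [X]; this
   identifies asymptotic Cauchy sequences without a quotient type. *)
Definition completion_pt : Type := {phi : X -> R | exists u, dist_profile u phi}.

Definition pt_seq (p : completion_pt) : nat -> X := proj1_sig (cid (proj2_sig p)).

Lemma pt_seqP (p : completion_pt) : dist_profile (pt_seq p) (proj1_sig p).
Proof. exact: proj2_sig (cid (proj2_sig p)). Qed.

Lemma cauchy_dist_crit (u v : nat -> X) :
  cauchy_seq d u -> cauchy_seq d v -> Cauchy_crit (fun k => d (u k) (v k)).
Proof.
move=> cu cv eps eps_gt0.
have [N1 HN1] := cu (eps / 2) ltac:(lra).
have [N2 HN2] := cv (eps / 2) ltac:(lra).
exists (max N1 N2) => m n m_ge n_ge; rewrite /R_dist.
apply: Rle_lt_trans (dist_diff_le d hd _ _ _ _) _.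
have := HN1 m n ltac:(lia) ltac:(lia); have := HN2 m n ltac:(lia) ltac:(lia); lra.
Qed.

Lemma dist_profile_exists (u : nat -> X) :
  cauchy_seq d u -> exists phi, dist_profile u phi.
Proof.
move=> cu; exists (fun x => Rlim (fun k => d (u k) x)); split=> // x.
exact/Rlim_spec/cauchy_dist_crit/(converges_cauchy d hd _ _ (converges_const d hd x)).
Qed.

Lemma dist_profile_tail (u : nat -> X) (phi : X -> R) :
  dist_profile u phi ->
  forall eps, 0 < eps -> exists N, forall n, (N <= n)%nat -> phi (u n) <= eps.
Proof.
move=> [cu u_phi] eps eps_gt0; have [N HN] := cu eps eps_gt0.
exists N => n n_ge; apply: Un_cv_le_eventually (u_phi (u n)) (Un_cv_const eps) _.
by exists N => k k_ge; apply/Rlt_le/HN.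
Qed.

Lemma dist_profile_asymptotic (u v : nat -> X) (phi : X -> R) :
  dist_profile u phi -> dist_profile v phi -> Un_cv (fun k => d (u k) (v k)) 0.
Proof.
case: (hd) => dpos [_ [dsym dtri]] u_phi [_ v_phi] eps eps_gt0.
have [N1 HN1] := dist_profile_tail _ _ u_phi (eps / 3) ltac:(lra).
have [N2 HN2] := (proj1 u_phi) (eps / 3) ltac:(lra).
pose M := max N1 N2.
have [N3 HN3] := v_phi (u M) (eps / 3) ltac:(lra).
exists (max M N3) => k k_ge; rewrite /R_dist Rminus_0_r Rabs_pos_eq //.
have := dtri (u k) (u M) (v k); rewrite (dsym (u M) (v k)).
have := HN1 M ltac:(lia); have := HN2 k M ltac:(lia) ltac:(lia).
have /Rabs_def2 := HN3 k ltac:(lia); lra.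
Qed.

Definition completion_dist (p q : completion_pt) : R :=
  Rlim (fun k => d (pt_seq p k) (pt_seq q k)).

Lemma completion_dist_lim (p q : completion_pt) (u v : nat -> X) :
  dist_profile u (proj1_sig p) -> dist_profile v (proj1_sig q) ->
  Un_cv (fun k => d (u k) (v k)) (completion_dist p q).
Proof.
move=> up vq; have [pp qq] := (pt_seqP p, pt_seqP q).
apply: (Un_cv_squeeze (fun k => d (pt_seq p k) (pt_seq q k)) _
         (fun k => d (u k) (pt_seq p k) + d (v k) (pt_seq q k))).
- exact: Rlim_spec (cauchy_dist_crit _ _ (proj1 pp) (proj1 qq)).
- rewrite -(Rplus_0_r 0); apply: CV_plus.
  + exact: dist_profile_asymptotic up pp.
  + exact: dist_profile_asymptotic vq qq.
- by move=> k; apply: dist_diff_le.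
Qed.

Lemma completion_dist_pt_seq (p q : completion_pt) :
  Un_cv (fun k => d (pt_seq p k) (pt_seq q k)) (completion_dist p q).
Proof. exact: completion_dist_lim (pt_seqP p) (pt_seqP q). Qed.

Lemma dist_profile_const (x : X) : dist_profile (fun=> x) (d x).
Proof.
split=> [|y]; last exact: Un_cv_const.
exact: converges_cauchy d hd _ _ (converges_const d hd x).
Qed.

Definition completion_emb (x : X) : completion_pt :=
  exist _ (d x) (ex_intro (dist_profile^~ (d x)) _ (dist_profile_const x)).

Lemma completion_dist_emb_r (p : completion_pt) (x : X) :
  completion_dist p (completion_emb x) = proj1_sig p x.
Proof.
have := completion_dist_lim p (completion_emb x) _ _ (pt_seqP p) (dist_profile_const x).
by move/UL_sequence; apply; apply: (proj2 (pt_seqP p)).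
Qed.

Lemma completion_dist_emb (x y : X) :
  completion_dist (completion_emb x) (completion_emb y) = d x y.
Proof. by rewrite completion_dist_emb_r. Qed.

Lemma completion_dist_metric : is_metric completion_dist.
Proof.
case: (hd) => dpos [d0 [dsym dtri]].
split; [|split; [|split]].
- move=> p q; apply: Un_cv_le_eventually (Un_cv_const 0) (completion_dist_pt_seq p q) _.
  by exists 0%nat.
- move=> p q; split=> [pq0|<-]; last first.
    apply: UL_sequence (completion_dist_pt_seq p p) _.
    have -> : (fun k => d (pt_seq p k) (pt_seq p k)) = fun=> 0.
      by apply: funext => k; apply/d0.
    exact: Un_cv_const.
  have [[_ u_p] [_ v_q]] := (pt_seqP p, pt_seqP q).
  have : proj1_sig p = proj1_sig q.
    apply: funext => x; apply: UL_sequence (v_q x).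
    apply: (Un_cv_squeeze _ _ (fun k => d (pt_seq p k) (pt_seq q k)) _ (u_p x)).
      by rewrite -pq0; apply: completion_dist_pt_seq.
    move=> k; apply: Rabs_le; have := dtri (pt_seq p k) (pt_seq q k) x.
    have := dtri (pt_seq q k) (pt_seq p k) x.
    by rewrite (dsym (pt_seq q k) (pt_seq p k)); lra.
  by case: p q {pq0 u_p v_q} => [phi hp] [psi hq] /= phi_psi; apply: eq_exist.
- move=> p q; apply: UL_sequence (completion_dist_pt_seq p q) _.
  by under eq_fun do rewrite dsym; apply: completion_dist_pt_seq.
- move=> p q r; apply: Un_cv_le_eventually (completion_dist_pt_seq p r) _ _.
    exact: CV_plus (completion_dist_pt_seq p q) (completion_dist_pt_seq q r).
  by exists 0%nat => k _; apply: dtri.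
Qed.

Lemma completion_emb_dense :
  dense_set completion_dist (fun p => exists x, completion_emb x = p).
Proof.
move=> p eps eps_gt0.
have [N HN] := dist_profile_tail _ _ (pt_seqP p) (eps / 2) ltac:(lra).
exists (completion_emb (pt_seq p N)); split; first by exists (pt_seq p N).
by rewrite completion_dist_emb_r; have := HN N (le_n N); lra.
Qed.

Lemma completion_emb_converges (u : nat -> X) :
  cauchy_seq d u -> exists p, converges_to completion_dist (fun k => completion_emb (u k)) p.
Proof.
move=> /dist_profile_exists [phi up].
exists (exist _ phi (ex_intro (dist_profile^~ phi) u up)) => eps eps_gt0.
have [N HN] := dist_profile_tail _ _ up (eps / 2) ltac:(lra).
case: completion_dist_metric => _ [_ [dist_sym _]].
by exists N => n /HN phi_un; rewrite dist_sym completion_dist_emb_r /=; lra.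
Qed.

Lemma completion_exists : is_completion d completion_dist completion_emb.
Proof.
have emb_iso : isometry d completion_dist completion_emb by exact: completion_dist_emb.
split; first exact: completion_dist_metric.
split; last by split; [exact: emb_iso | exact: completion_emb_dense].
apply: (complete_of_dense _ completion_dist_metric _ completion_emb_dense) => w.
by move/(isometry_cauchy _ _ _ _ emb_iso); apply: completion_emb_converges.
Qed.

End Completion.

Lemma isometry_injective {A X : Type} (dA : A -> A -> R) (dX : X -> X -> R) (f : A -> X) :
  is_metric dA -> is_metric dX -> isometry dA dX f -> injective f.
Proof.
by move=> [_ [dA0 _]] [_ [dX0 _]] f_iso a a' faa'; apply/dA0; rewrite -f_iso faa'; apply/dX0.
Qed.

Lemma is_metric_comp_inj {A X : Type} (dX : X -> X -> R) (g : A -> X) :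
  is_metric dX -> injective g -> is_metric (fun a a' => dX (g a) (g a')).
Proof.
move=> [dpos [d0 [dsym dtri]]] g_inj; split=> //; split=> [a a'|]; last by split.
by split=> [/d0/g_inj | ->]; last exact/d0.
Qed.

Local Open Scope classical_set_scope.

Lemma range_enumeration {X : Type} (h k : nat -> X) :
  injective k -> range k `<=` range h ->
  exists g : nat -> X, injective g /\ range g = range h.
Proof.
elim/Ppointed: X => X in h k *; first by case: (no (h O)).
move=> k_inj kh.
have nat_h : ([set: nat] #= range h)%card.
  apply/card_esym/eq_card_nat; first exact: card_image_le.
  apply/infiniteP/(card_le_trans _ (subset_card_le kh)).
  by move: (inj_card_eq (A := setT) (in2W k_inj)); rewrite card_eq_le => /andP[].
have [g [g_fun g_inj g_surj]] := card_set_bijP nat_h.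
exists g; split; first by move=> m n; apply: g_inj; rewrite ?in_setT.
by apply/seteqP; split=> [_ [n _ <-]|//]; exact: g_fun.
Qed.

(* The images of [k0] and [k1] may overlap, so their union is enumerated
   without repetitions rather than interleaved. *)
Lemma common_dense_metric_on_nat {X : Type} (d0 d1 : nat -> nat -> R) (dX : X -> X -> R)
    (k0 k1 : nat -> X) :
  is_metric d0 -> is_metric dX -> dense_isometry d0 dX k0 -> dense_isometry d1 dX k1 ->
  exists ds : nat -> nat -> R, is_metric ds /\
    exists i0 i1 : nat -> nat, dense_isometry d0 ds i0 /\ dense_isometry d1 ds i1.
Proof.
move=> hd0 hX k0_dense k1_dense.
pose h j := if Nat.even j then k0 (Nat.div2 j) else k1 (Nat.div2 j).
have h_even n : h (2 * n)%nat = k0 n by rewrite /h Nat.even_even Nat.div2_double.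
have h_odd n : h (2 * n + 1)%nat = k1 n by rewrite /h Nat.even_odd Nat.div2_odd'.
have k0_inj := isometry_injective _ _ _ hd0 hX (proj1 k0_dense).
have [g [g_inj g_h]] : exists g : nat -> X, injective g /\ range g = range h.
  by apply: range_enumeration k0_inj _ => _ [n _ <-]; exists (2 * n)%nat; rewrite ?h_even.
have g_onto j : exists a, g a = h j.
  have [a _ ga] : range g (h j) by rewrite g_h; exists j.
  by exists a.
have /choice [i0 i0_k0] : forall n, exists a, g a = k0 n.
  by move=> n; rewrite -h_even; apply: g_onto.
have /choice [i1 i1_k1] : forall n, exists a, g a = k1 n.
  by move=> n; rewrite -h_odd; apply: g_onto.
exists (fun a a' => dX (g a) (g a')); split; first exact: is_metric_comp_inj.
exists i0, i1; split; apply: (dense_isometry_factor _ _ dX g) => //.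
  by under eq_fun do rewrite i0_k0.
by under eq_fun do rewrite i1_k1.
Qed.

Theorem corollary3p4 (d0 d1 : nat -> nat -> R)
  (hd0 : is_metric d0) (hd1 : is_metric d1) :
  (forall (X0 : Type) (ds0 : X0 -> X0 -> R) (i0 : nat -> X0)
          (X1 : Type) (ds1 : X1 -> X1 -> R) (i1 : nat -> X1),
      is_completion d0 ds0 i0 -> is_completion d1 ds1 i1 ->
      polish_metric ds0 /\ polish_metric ds1 /\
      exists f : X0 -> X1, isometric_isomorphism ds0 ds1 f)
  <->
  (exists ds : nat -> nat -> R, is_metric ds /\
     exists i0 i1 : nat -> nat,
       dense_isometry d0 ds i0 /\ dense_isometry d1 ds i1).
Proof.
split.
- move=> iso_completions.
  have [C0 C1] := (completion_exists d0 hd0, completion_exists d1 hd1).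
  have [_ [_ [f f_iso]]] := iso_completions _ _ _ _ _ _ C0 C1.
  case: C1 => hC1 [_ j1_dense].
  apply: (common_dense_metric_on_nat _ _ _ _ _ hd0 hC1 _ j1_dense).
  exact: dense_isometry_comp_iso (proj2 (proj2 C0)) f_iso.
- move=> [ds [hds [i0 [i1 [i0_dense i1_dense]]]]] X0 ds0 j0 X1 ds1 j1 C0 C1.
  split; first exact: completion_polish C0.
  split; first exact: completion_polish C1.
  have [j0' C0'] := completion_of_dense_subspace _ _ _ _ _ hds i0_dense C0.
  have [j1' C1'] := completion_of_dense_subspace _ _ _ _ _ hds i1_dense C1.
  exact: completion_unique C0' C1'.
Qed.
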